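(* Suppose $g(K_a,K_b)<(a-1)(b-1)$ for some positive integers $a$ and $b$. Then there is a constant $\beta<1$ such that $g(n)\le \beta n^2$ for all $n$.
   Context: $K_m$ is the complete graph on $m$ vertices. A complete bipartite subgraph of a graph $G$ has two disjoint nonempty vertex classes $X,Y$ and edge set all $xy$ with $x\in X,y\in Y$ (all edges of $G$). For graphs $G,H$, a block is a set $E(B_1)\times E(B_2)$ where $B_1$ is a complete bipartite subgraph of $G$ and $B_2$ is a complete bipartite subgraph of $H$; $g(G,H)$ is the minimum number of blocks whose union is $E(G)\times E(H)$ with the blocks pairwise disjoint, and $g(n)=g(K_n,K_n)$. *)

From mathcomp Require Import all_boot all_order all_algebra.
Set Implicit Arguments. Unset Strict Implicit. Unset Printing Implicit Defensive.

(* A simple graph: a vertex finType V with a symmetric irreflexive relation e.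
   Its edges are the 2-element sets {x,y} with e x y. *)
Definition edges (V : finType) (e : rel V) : {set {set V}} :=
  [set [set x; y] | x in V, y in V & e x y].

Definition Krel (m : nat) : rel 'I_m := fun x y => x != y.

Definition is_cbs (V : finType) (e : rel V) (XY : {set V} * {set V}) : bool :=
  [&& XY.1 :&: XY.2 == set0, XY.1 != set0, XY.2 != set0 &
      [forall x in XY.1, forall y in XY.2, e x y]].

Definition cbs_edges (V : finType) (XY : {set V} * {set V}) : {set {set V}} :=
  [set [set x; y] | x in XY.1, y in XY.2].

Definition block (V W : finType) (B : ({set V} * {set V}) * ({set W} * {set W}))
  : {set {set V} * {set W}} :=
  setX (cbs_edges B.1) (cbs_edges B.2).

Definition decomp (V W : finType) (eV : rel V) (eW : rel W) (k : nat) : bool :=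
  [exists f : {ffun 'I_k -> ({set V} * {set V}) * ({set W} * {set W})},
    [&& [forall i, is_cbs eV (f i).1 && is_cbs eW (f i).2],
        [forall i, forall j, (i != j) ==> (block (f i) :&: block (f j) == set0)] &
        \bigcup_i block (f i) == setX (edges eV) (edges eW)]].

(* Decompositions into
   #E(G)*#E(H) blocks (single edge pairs, K_{1,1} x K_{1,1}) always exist,
   so searching k in [0, #E(G)*#E(H)] finds the true minimum. *)
Definition gGH (V W : finType) (eV : rel V) (eW : rel W) : nat :=
  find (decomp eV eW) (iota 0 (#|edges eV| * #|edges eW|).+1).

Definition gK (a b : nat) : nat := gGH (@Krel a) (@Krel b).
Definition g (n : nat) : nat := gK n n.

(* A decomposition of K_a x K_b into c < (a-1)(b-1) blocks yields one of K_A x K_A,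
   A = ab, into fewer than (A-1)^2 blocks: view the vertices of K_A as pairs (x, y);
   the edge pairs whose left edge changes x and whose right edge changes y are
   covered by pulling the given decomposition back along the two projections, and
   all other edge pairs by products of star partitions, for a total of at most
   (A-1)^2 - (a-1)(b-1) + c blocks.  Blowing up every vertex of K_A into m copies in
   the same way (edge pairs lying inside copies on both sides take m^2 copies of the
   decomposition of K_A x K_A) gives g(mA) <= (mA)^2 - m^2, a saving of the fixed
   fraction 1/A^2.  Rounding n up to a multiple of A costs only O(An), so
   g(n) <= (1 - 1/K) n^2 with K = 4A^3 once n > K, and g(n) <= (n-1)^2 covers n <= K. *)

From mathcomp Require Import all_boot all_order all_algebra.
From mathcomp Require Import zify.
Set Implicit Arguments. Unset Strict Implicit. Unset Printing Implicit Defensive.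
Import Order.TTheory GRing.Theory Num.Theory.

Definition Kgraph (V : finType) : rel V := fun x y => x != y.

Definition biclique (V : finType) := ({set V} * {set V})%type.

Definition is_biclique (V : finType) (B : biclique V) := is_cbs (@Kgraph V) B.

Definition covers (V : finType) (B : biclique V) (u v : V) : bool :=
  (u \in B.1) && (v \in B.2) || (v \in B.1) && (u \in B.2).

Definition nonempty_biclique (V : finType) (B : biclique V) :=
  (B.1 != set0) && (B.2 != set0).

Section Bicliques.
Variable V : finType.
Implicit Types (B : biclique V) (u v x y : V).

Lemma set2_inj u v x y :
  [set u; v] = [set x; y] -> (u = x /\ v = y) \/ (u = y /\ v = x).
Proof.
move=> E.
have : [/\ u \in [set x; y], v \in [set x; y], x \in [set u; v] & y \in [set u; v]].
  by rewrite -E set21 set22 E set21 set22.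
by case=> /set2P[]? /set2P[]? /set2P[]? /set2P[]?; subst; auto.
Qed.

Lemma coversC B u v : covers B u v = covers B v u.
Proof. by rewrite /covers orbC. Qed.

Lemma mem_cbs_edges B u v : ([set u; v] \in cbs_edges B) = covers B u v.
Proof.
case: B => X Y; rewrite /cbs_edges /covers /=; apply/imset2P/idP.
- by case=> x y hx hy /set2_inj[][-> ->]; rewrite hx hy ?orbT.
- case/orP => /andP[hu hv]; first by exists u v.
  by exists v u => //; rewrite setUC.
Qed.

Lemma cbs_edgesP B E :
  E \in cbs_edges B -> exists u v, E = [set u; v] /\ covers B u v.
Proof.
by case: B => X Y /imset2P[x y hx hy ->]; exists x, y; rewrite /covers hx hy.
Qed.

Lemma mem_edges_Kgraph u v : ([set u; v] \in edges (@Kgraph V)) = (u != v).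
Proof.
apply/imset2P/idP => [[x y _]|huv]; last by exists u v; rewrite ?inE.
by rewrite inE => hxy /set2_inj[][-> ->]; rewrite // eq_sym.
Qed.

Lemma edges_KgraphP E :
  E \in edges (@Kgraph V) -> exists u v, E = [set u; v] /\ u != v.
Proof. by case/imset2P => x y _; rewrite inE => hxy ->; exists x, y. Qed.

Lemma covers_nonempty B u v : covers B u v -> nonempty_biclique B.
Proof. by case/orP => /andP[h1 h2]; apply/andP; split; apply/set0Pn; eauto. Qed.

Lemma is_bicliqueP B :
  reflect [/\ B.1 != set0, B.2 != set0 & {in B.1 & B.2, forall x y, x != y}]
          (is_biclique B).
Proof.
case: B => X Y; apply: (iffP and4P) => /= [[_ hX hY /forallP hXY]|[hX hY hXY]].
  split=> // x y hx hy.
  by move: (hXY x); rewrite hx => /forallP/(_ y); rewrite hy.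
split=> //.
  apply/eqP/setP => x; rewrite !inE; apply/negP => /andP[hx hy].
  by move: (hXY x x hx hy); rewrite eqxx.
by apply/forallP => x; apply/implyP => hx; apply/forallP => y; apply/implyP; apply: hXY.
Qed.

Lemma covers_neq B u v : is_biclique B -> covers B u v -> u != v.
Proof.
case/is_bicliqueP => _ _ hB /orP[]/andP[hu hv]; first exact: hB.
by rewrite eq_sym; apply: hB.
Qed.

Lemma covers_diag B u : is_biclique B -> covers B u u = false.
Proof. by move=> hB; apply/negP => /(covers_neq hB); rewrite eqxx. Qed.

End Bicliques.

Definition biclique_partition (V : finType) (S : seq (biclique V)) (P : rel V) :=
  all (@is_biclique V) S /\
  forall u v, u != v -> count (fun B => covers B u v) S = P u v.

Definition block_partition (V W : finType) (L : seq (biclique V * biclique W))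
    (R : V -> V -> W -> W -> bool) :=
  all (fun B => is_biclique B.1 && is_biclique B.2) L /\
  forall u v w z, u != v -> w != z ->
    count (fun B => covers B.1 u v && covers B.2 w z) L = R u v w z.

Lemma eq_biclique_partition (V : finType) S (P Q : rel V) :
  (forall u v, u != v -> P u v = Q u v) ->
  biclique_partition S P -> biclique_partition S Q.
Proof. by move=> ePQ [hS hP]; split=> // u v huv; rewrite -ePQ // hP. Qed.

Lemma eq_block_partition (V W : finType) L (R R' : V -> V -> W -> W -> bool) :
  (forall u v w z, u != v -> w != z -> R u v w z = R' u v w z) ->
  block_partition L R -> block_partition L R'.
Proof. by move=> eR [hL hR]; split=> // u v w z huv hwz; rewrite -eR // hR. Qed.

Lemma block_partition_cat (V W : finType) L1 L2 (R1 R2 R : V -> V -> W -> W -> bool) :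
  (forall u v w z, u != v -> w != z -> R1 u v w z + R2 u v w z = R u v w z) ->
  block_partition L1 R1 -> block_partition L2 R2 -> block_partition (L1 ++ L2) R.
Proof.
move=> eR [h1 c1] [h2 c2]; split; first by rewrite all_cat h1 h2.
by move=> u v w z huv hwz; rewrite count_cat c1 // c2 // eR.
Qed.

Lemma block_partition_allpairs (V W : finType) S T (P : rel V) (Q : rel W) :
  biclique_partition S P -> biclique_partition T Q ->
  block_partition [seq (x, y) | x <- S, y <- T] (fun u v w z => P u v && Q w z).
Proof.
move=> [hS cS] [hT cT]; split.
  apply/allP => B /allpairsP[[x y] [/= hx hy ->]] /=.
  by rewrite (allP hS x hx) (allP hT y hy).
move=> u v w z huv hwz; rewrite -mulnb -(cS u v huv) -(cT w z hwz).
elim: S {hS cS} => //= x S IH; rewrite count_cat IH count_map mulnDl.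
congr (_ + _); case hx: (covers x u v); rewrite ?mul1n ?mul0n.
- by apply: eq_count => y /=; rewrite hx.
- by rewrite -(count_pred0 T); apply: eq_count => y /=; rewrite hx.
Qed.

Lemma count_bigcat (I : finType) (T : Type) (S : I -> seq T) (a : pred T) :
  count a (\big[cat/[::]]_i S i) = \sum_i count a (S i).
Proof. exact: (big_morph (count a) (count_cat a) (erefl : count a [::] = 0)). Qed.

Lemma size_bigcat_le (I : finType) (T : Type) (S : I -> seq T) k :
  (forall i, size (S i) <= k) -> size (\big[cat/[::]]_i S i) <= #|I| * k.
Proof.
move=> hS; rewrite (big_morph size (@size_cat T) (erefl : size [::] = 0)) -sum_nat_const.
exact: leq_sum.
Qed.

Lemma biclique_partition_bigcat (V I : finType) (S : I -> seq (biclique V))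
    (P : I -> rel V) (Q : rel V) :
  (forall u v, u != v -> \sum_i P i u v = Q u v) ->
  (forall i, biclique_partition (S i) (P i)) ->
  biclique_partition (\big[cat/[::]]_i S i) Q.
Proof.
move=> eQ hS; split.
  rewrite (big_morph (all _) (all_cat _) (erefl : all _ [::] = true)) big_andE.
  by apply/forallP => i; case: (hS i).
by move=> u v huv; rewrite count_bigcat -eQ //; apply: eq_bigr => i _; case: (hS i) => _ ->.
Qed.

Lemma block_partition_bigcat (V W I : finType) (L : I -> seq (biclique V * biclique W))
    (R : I -> V -> V -> W -> W -> bool) (R' : V -> V -> W -> W -> bool) :
  (forall u v w z, u != v -> w != z -> \sum_i R i u v w z = R' u v w z) ->
  (forall i, block_partition (L i) (R i)) ->
  block_partition (\big[cat/[::]]_i L i) R'.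
Proof.
move=> eR hL; split.
  rewrite (big_morph (all _) (all_cat _) (erefl : all _ [::] = true)) big_andE.
  by apply/forallP => i; case: (hL i).
move=> u v w z huv hwz; rewrite count_bigcat -eR //.
by apply: eq_bigr => i _; case: (hL i) => _ ->.
Qed.

Definition preim_biclique (V X : finType) (D : {set V}) (f : V -> X) (B : biclique X)
  : biclique V := (D :&: f @^-1: B.1, D :&: f @^-1: B.2).

(* A preimage may have an empty class; it then covers no edge and is dropped. *)
Definition preim_bicliques (V X : finType) (D : {set V}) (f : V -> X)
    (S : seq (biclique X)) : seq (biclique V) :=
  filter (@nonempty_biclique V) (map (preim_biclique D f) S).

Definition preim_blocks (V W X Y : finType) (D : {set V}) (f : V -> X)
    (D' : {set W}) (f' : W -> Y) (L : seq (biclique X * biclique Y))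
  : seq (biclique V * biclique W) :=
  filter (fun B => nonempty_biclique B.1 && nonempty_biclique B.2)
    (map (fun B => (preim_biclique D f B.1, preim_biclique D' f' B.2)) L).

Section Preimages.
Variables V X : finType.

Lemma covers_preim (D : {set V}) (f : V -> X) B u v :
  covers (preim_biclique D f B) u v = [&& u \in D, v \in D & covers B (f u) (f v)].
Proof. by rewrite /covers !inE; case: (u \in D); case: (v \in D); rewrite ?andbF. Qed.

Lemma is_biclique_preim (D : {set V}) (f : V -> X) B :
  is_biclique B -> nonempty_biclique (preim_biclique D f B) ->
  is_biclique (preim_biclique D f B).
Proof.
move=> /is_bicliqueP[_ _ hB] /andP[h1 h2]; apply/is_bicliqueP; split=> // x y.
rewrite !inE => /andP[_ hx] /andP[_ hy]; apply: contra (hB _ _ hx hy).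
by move=> /eqP->.
Qed.

Lemma size_preim_bicliques (D : {set V}) (f : V -> X) S :
  size (preim_bicliques D f S) <= size S.
Proof. by rewrite size_filter -(size_map (preim_biclique D f)) count_size. Qed.

Lemma biclique_partition_preim (D : {set V}) (f : V -> X) S P :
  biclique_partition S P ->
  biclique_partition (preim_bicliques D f S)
    (fun u v => [&& u \in D, v \in D, f u != f v & P (f u) (f v)]).
Proof.
move=> [hS cS]; split.
  apply/allP => B; rewrite mem_filter => /andP[hne /mapP[B0 hB0 eB]].
  by rewrite eB in hne *; apply: is_biclique_preim => //; apply: (allP hS).
move=> u v huv; rewrite count_filter.
rewrite (eq_count (a2 := fun B => covers B u v)); last first.
  by move=> B /=; case h: (covers B u v); rewrite ?andbF // (covers_nonempty h).
rewrite count_map (eq_count (a2 := fun B => [&& u \in D, v \in D & covers B (f u) (f v)]));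
  last by move=> B; rewrite /= covers_preim.
case: (u \in D); case: (v \in D); rewrite /= ?count_pred0 //.
have [efuv|] := eqVneq (f u) (f v); last exact: cS.
rewrite efuv /= -(count_pred0 S); apply: eq_in_count => B hB.
exact: covers_diag (allP hS B hB).
Qed.
End Preimages.

Lemma size_preim_blocks (V W X Y : finType) (D : {set V}) (f : V -> X)
    (D' : {set W}) (f' : W -> Y) L :
  size (preim_blocks D f D' f' L) <= size L.
Proof. by rewrite size_filter (leq_trans (count_size _ _)) ?size_map. Qed.

Lemma block_partition_preim (V W X Y : finType) (D : {set V}) (f : V -> X)
    (D' : {set W}) (f' : W -> Y) L R :
  block_partition L R ->
  block_partition (preim_blocks D f D' f' L) (fun u v w z =>
    [&& [&& u \in D, v \in D, w \in D' & z \in D'], f u != f v, f' w != f' z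
      & R (f u) (f v) (f' w) (f' z)]).
Proof.
move=> [hL cL]; split.
  apply/allP => B; rewrite mem_filter => /andP[/andP[hn1 hn2] /mapP[B0 hB0 eB]].
  rewrite eB in hn1 hn2 *; case/andP: (allP hL B0 hB0) => hb1 hb2.
  by rewrite /= !is_biclique_preim.
move=> u v w z huv hwz; rewrite count_filter.
rewrite (eq_count (a2 := fun B => covers B.1 u v && covers B.2 w z)); last first.
  move=> B /=; case h1: (covers B.1 u v); case h2: (covers B.2 w z); rewrite ?andbF //.
  by rewrite (covers_nonempty h1) (covers_nonempty h2).
rewrite count_map (eq_count (a2 := fun B => [&& u \in D, v \in D, w \in D' & z \in D']
    && (covers B.1 (f u) (f v) && covers B.2 (f' w) (f' z)))); last first.
  move=> B /=; rewrite !covers_preim.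
  by case: (u \in D); case: (v \in D); case: (w \in D'); case: (z \in D'); rewrite ?andbF.
case: [&& u \in D, v \in D, w \in D' & z \in D']; last by rewrite /= count_pred0.
have [efuv|nfuv] := eqVneq (f u) (f v).
  rewrite efuv /= -(count_pred0 L); apply: eq_in_count => B hB.
  by case/andP: (allP hL B hB) => hB1 _; rewrite covers_diag.
have [efwz|nfwz] := eqVneq (f' w) (f' z); last exact: cL.
rewrite efwz /= -(count_pred0 L); apply: eq_in_count => B hB.
by case/andP: (allP hL B hB) => _ hB2; rewrite covers_diag ?andbF.
Qed.

Definition star (V : finType) (i : nat) : biclique V :=
  ([set v | enum_rank v == i :> nat], [set v | i < enum_rank v]).

Definition stars (V : finType) : seq (biclique V) := map (@star V) (iota 0 #|V|.-1).

Section Stars.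
Variable V : finType.

Lemma size_stars : size (stars V) = #|V|.-1.
Proof. by rewrite size_map size_iota. Qed.

Lemma is_biclique_star i : i < #|V|.-1 -> is_biclique (@star V i).
Proof.
move=> hi; have hV : #|V|.-1 < #|V| by lia.
apply/is_bicliqueP; split.
- apply/set0Pn; exists (enum_val (Ordinal (ltn_trans hi hV))).
  by rewrite inE enum_valK.
- by apply/set0Pn; exists (enum_val (Ordinal hV)); rewrite inE enum_valK.
- move=> x y; rewrite !inE => /eqP hx hy; apply: contraTneq hy => <-.
  by rewrite hx ltnn.
Qed.

Lemma covers_star i (u v : V) : enum_rank u < enum_rank v ->
  covers (star V i) u v = (i == enum_rank u).
Proof.
move=> huv; rewrite /covers !inE eq_sym.
have [->|_] := eqVneq i (enum_rank u); first by rewrite huv.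
by rewrite /=; case: eqP => // <-; rewrite ltnNge (ltnW huv).
Qed.

Lemma biclique_partition_stars : biclique_partition (stars V) (fun _ _ => true).
Proof.
split.
  by apply/allP => B /mapP[i]; rewrite mem_iota => /andP[_ hi] ->; apply: is_biclique_star.
have count_lt u v : enum_rank u < enum_rank v -> count (fun B => covers B u v) (stars V) = 1.
  move=> huv; rewrite count_map (eq_count (a2 := pred1 (val (enum_rank u)))).
    rewrite count_uniq_mem ?iota_uniq // mem_iota add0n.
    suff -> : enum_rank u < #|V|.-1 by [].
    by apply: leq_trans huv _; rewrite -ltnS (ltn_predK (ltn_ord (enum_rank v))).
  by move=> i; rewrite /= covers_star.
move=> u v huv; have : enum_rank u != enum_rank v by rewrite (inj_eq enum_rank_inj).
rewrite neq_ltn => /orP[/count_lt //|/count_lt].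
by rewrite (eq_count (a2 := fun B => covers B v u)) // => B; rewrite coversC.
Qed.

End Stars.

Definition decomposable (V W : finType) (k : nat) :=
  exists2 L : seq (biclique V * biclique W),
    block_partition L (fun _ _ _ _ => true) & size L <= k.

Lemma count_gt1 (T : eqType) (x0 : T) (a : pred T) (s : seq T) i j :
  i < size s -> j < size s -> i != j -> a (nth x0 s i) -> a (nth x0 s j) ->
  1 < count a s.
Proof.
elim: s i j => //= x s IH [|i] [|j] //= hi hj hij hai haj.
- by rewrite hai add1n ltnS -has_count; apply/hasP; exists (nth x0 s j) => //; apply: mem_nth.
- by rewrite haj add1n ltnS -has_count; apply/hasP; exists (nth x0 s i) => //; apply: mem_nth.
- by rewrite (leq_trans (IH i j hi hj hij hai haj)) ?leq_addl.
Qed.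

Section Decompositions.
Variables V W : finType.
Implicit Type L : seq (biclique V * biclique W).

Lemma block_partition_decomp L :
  block_partition L (fun _ _ _ _ => true) -> decomp (@Kgraph V) (@Kgraph W) (size L).
Proof.
move=> [hL cL]; pose B0 : biclique V * biclique W := ((set0, set0), (set0, set0)).
have hLi (i : 'I_(size L)) : is_biclique (nth B0 L i).1 && is_biclique (nth B0 L i).2.
  exact: all_nthP B0 hL i (ltn_ord i).
apply/existsP; exists [ffun i : 'I_(size L) => nth B0 L i]; apply/and3P; split.
- by apply/forallP => i; rewrite ffunE; apply: hLi.
- apply/forallP => i; apply/forallP => j; apply/implyP => hij.
  apply/eqP/setP => -[E F]; rewrite inE [_ \in set0]inE !ffunE /block !in_setX.
  apply/negP => /andP[/andP[hEi hFi]].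
  case/cbs_edgesP: hEi => u [v [-> cuv]]; case/cbs_edgesP: hFi => w [z [-> cwz]].
  rewrite !mem_cbs_edges => cj; case/andP: (hLi i) => hi1 hi2.
  have := cL u v w z (covers_neq hi1 cuv) (covers_neq hi2 cwz).
  move/eqP; apply/negP; rewrite neq_ltn; apply/orP; right.
  by apply: (count_gt1 (x0 := B0) (ltn_ord i) (ltn_ord j) hij) => //; apply/andP.
- apply/eqP/setP => -[E F]; apply/bigcupP/idP.
  + case=> i _; rewrite ffunE /block in_setX => /andP[hE hF].
    case/andP: (hLi i) => hi1 hi2.
    case/cbs_edgesP: hE => u [v [-> cuv]]; case/cbs_edgesP: hF => w [z [-> cwz]].
    by rewrite in_setX !mem_edges_Kgraph (covers_neq hi1 cuv) (covers_neq hi2 cwz).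
  + rewrite in_setX => /andP[/edges_KgraphP[u [v [-> huv]]] /edges_KgraphP[w [z [-> hwz]]]].
    have : has (fun B => covers B.1 u v && covers B.2 w z) L by rewrite has_count cL.
    case/hasP => B hB /andP[cuv cwz].
    have hi : index B L < size L by rewrite index_mem.
    exists (Ordinal hi) => //.
    by rewrite ffunE /= nth_index // /block in_setX !mem_cbs_edges cuv cwz.
Qed.

Lemma decomp_block_partition k : decomp (@Kgraph V) (@Kgraph W) k ->
  exists2 L : seq (biclique V * biclique W),
    block_partition L (fun _ _ _ _ => true) & size L = k.
Proof.
case/existsP => f /and3P[/forallP hf /forallP hdisj /eqP hcup].
exists [seq f i | i <- enum 'I_k]; last by rewrite size_map size_enum_ord.
split; first by apply/allP => B /mapP[i _ ->]; apply: hf.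
move=> u v w z huv hwz; rewrite count_map.
pose p := ([set u; v], [set w; z]).
have : p \in setX (edges (@Kgraph V)) (edges (@Kgraph W)).
  by rewrite in_setX !mem_edges_Kgraph huv hwz.
rewrite -hcup => /bigcupP[i _ hi].
rewrite (eq_count (a2 := pred1 i)); first by rewrite count_uniq_mem ?enum_uniq ?mem_enum.
move=> j /=; rewrite -!mem_cbs_edges -in_setX; apply/idP/eqP => [hj|->//].
apply/eqP; apply: contraT => nij.
move: (hdisj j) => /forallP/(_ i); rewrite nij => /eqP/setP/(_ p).
by rewrite inE hi hj inE.
Qed.

End Decompositions.

Lemma gGH_le (V W : finType) (eV : rel V) (eW : rel W) k :
  decomp eV eW k -> gGH eV eW <= k.
Proof.
move=> hk; rewrite /gGH; set n := (_ * _).+1.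
have [kn|] := ltnP k n; last by apply: leq_trans; rewrite -{2}(size_iota 0 n) find_size.
rewrite leqNgt; apply/negP => /(before_find 0).
by rewrite nth_iota // add0n hk.
Qed.

Lemma decomp_gGH (V W : finType) (eV : rel V) (eW : rel W) :
  gGH eV eW <= #|edges eV| * #|edges eW| -> decomp eV eW (gGH eV eW).
Proof.
rewrite /gGH; set n := (_ * _) => hle.
have hs : has (decomp eV eW) (iota 0 n.+1) by rewrite has_find size_iota ltnS.
by have := nth_find 0 hs; rewrite nth_iota // add0n.
Qed.

Lemma card_edges_Kgraph (V : finType) : #|V|.-1 <= #|edges (@Kgraph V)|.
Proof.
have [V0|[x0 _]] := set_0Vmem [set: V]; first by rewrite -cardsT V0 cards0.
have inj_star : {in [set~ x0] &, injective (fun y => [set x0; y])}.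
  by move=> y y' _ _ /set2_inj[][] // -> ->.
rewrite -(cardsC1 x0) -(card_in_imset inj_star); apply/subset_leq_card/subsetP.
by move=> E /imsetP[y]; rewrite !inE => hy ->; rewrite mem_edges_Kgraph eq_sym.
Qed.

Lemma decomposable_gGH (V W : finType) :
  gGH (@Kgraph V) (@Kgraph W) <= #|V|.-1 * #|W|.-1 ->
  decomposable V W (gGH (@Kgraph V) (@Kgraph W)).
Proof.
move=> hle; have /decomp_gGH : gGH (@Kgraph V) (@Kgraph W) <=
    #|edges (@Kgraph V)| * #|edges (@Kgraph W)|.
  by apply: leq_trans hle _; apply: leq_mul; apply: card_edges_Kgraph.
by case/decomp_block_partition => L hL <-; exists L.
Qed.

Lemma g_le_decomposable (V : finType) n k :
  n <= #|V| -> decomposable V V k -> g n <= k.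
Proof.
move=> hn [L hL hk].
pose f (i : 'I_n) : V := enum_val (widen_ord hn i).
have f_inj : injective f by move=> i j /enum_val_inj/(congr1 val)/= /val_inj.
have hLf : block_partition (preim_blocks setT f setT f L) (fun _ _ _ _ => true).
  apply: eq_block_partition (block_partition_preim setT f setT f hL) => u v w z huv hwz.
  by rewrite !inE !(inj_eq f_inj) huv hwz.
exact: leq_trans (gGH_le (block_partition_decomp hLf)) (leq_trans (size_preim_blocks _ _ _ _ _) hk).
Qed.

Lemma decomposable_stars (V W : finType) : decomposable V W (#|V|.-1 * #|W|.-1).
Proof.
exists [seq (x, y) | x <- stars V, y <- stars W]; last by rewrite size_allpairs !size_stars.
exact: block_partition_allpairs (biclique_partition_stars V) (biclique_partition_stars W).
Qed.

Definition cross_bicliques (V X : finType) (f : V -> X) : seq (biclique V) :=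
  preim_bicliques setT f (stars X).

Definition fibre_bicliques (V X Y : finType) (f : V -> X) (h : V -> Y)
  : seq (biclique V) :=
  \big[cat/[::]]_(x : X) preim_bicliques (f @^-1: [set x]) h (stars Y).

Definition cross_blocks (V W X Y : finType) (f : V -> X) (f' : W -> Y)
    (L : seq (biclique X * biclique Y)) : seq (biclique V * biclique W) :=
  preim_blocks setT f setT f' L.

Definition fibre_blocks (V W X X' Y Y' : finType) (f : V -> X) (h : V -> Y)
    (f' : W -> X') (h' : W -> Y') (L : seq (biclique Y * biclique Y'))
  : seq (biclique V * biclique W) :=
  \big[cat/[::]]_(p : X * X') preim_blocks (f @^-1: [set p.1]) h (f' @^-1: [set p.2]) h' L.

Section Fibres.
Variables (V X Y : finType) (f : V -> X) (h : V -> Y).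

Lemma biclique_partition_cross :
  biclique_partition (cross_bicliques f) (fun u v => f u != f v).
Proof.
apply: eq_biclique_partition (biclique_partition_preim _ f (biclique_partition_stars X)).
by move=> u v _; rewrite !inE andbT.
Qed.

Lemma size_cross_bicliques : size (cross_bicliques f) <= #|X|.-1.
Proof. by rewrite -(size_stars X) size_preim_bicliques. Qed.

Lemma size_fibre_bicliques : size (fibre_bicliques f h) <= #|X| * #|Y|.-1.
Proof. by apply: size_bigcat_le => x; rewrite -(size_stars Y) size_preim_bicliques. Qed.

Hypothesis fh_inj : forall u v, f u = f v -> h u = h v -> u = v.

Lemma neq_fibre u v : u != v -> f u = f v -> h u != h v.
Proof. by move=> huv efuv; apply: contra huv => /eqP/(fh_inj efuv)/eqP. Qed.

Lemma biclique_partition_fibre :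
  biclique_partition (fibre_bicliques f h) (fun u v => f u == f v).
Proof.
apply: (biclique_partition_bigcat (P := fun x u v =>
  [&& u \in f @^-1: [set x], v \in f @^-1: [set x], h u != h v & true])) => [u v huv|x].
  rewrite (bigD1 (f u)) //= big1 => [|x /negPf]; last by rewrite !inE eq_sym => ->.
  rewrite !inE eqxx andbT eq_sym; have [efuv|] //= := eqVneq (f u) (f v).
  by rewrite neq_fibre.
exact: (biclique_partition_preim (f @^-1: [set x]) h (biclique_partition_stars Y)).
Qed.

End Fibres.

Lemma block_partition_cross (V W X Y : finType) (f : V -> X) (f' : W -> Y) L :
  block_partition L (fun _ _ _ _ => true) ->
  block_partition (cross_blocks f f' L) (fun u v w z => (f u != f v) && (f' w != f' z)).
Proof.
move=> hL; apply: eq_block_partition (block_partition_preim setT f setT f' hL).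
by move=> u v w z _ _; rewrite !inE !andbT.
Qed.

Lemma size_fibre_blocks (V W X X' Y Y' : finType) (f : V -> X) (h : V -> Y)
    (f' : W -> X') (h' : W -> Y') L :
  size (fibre_blocks f h f' h' L) <= #|X| * #|X'| * size L.
Proof. by rewrite -card_prod; apply: size_bigcat_le => p; apply: size_preim_blocks. Qed.

Lemma block_partition_fibre (V W X X' Y Y' : finType) (f : V -> X) (h : V -> Y)
    (f' : W -> X') (h' : W -> Y') L :
  (forall u v, f u = f v -> h u = h v -> u = v) ->
  (forall w z, f' w = f' z -> h' w = h' z -> w = z) ->
  block_partition L (fun _ _ _ _ => true) ->
  block_partition (fibre_blocks f h f' h' L)
    (fun u v w z => (f u == f v) && (f' w == f' z)).
Proof.
move=> fh_inj fh_inj' hL.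
apply: (block_partition_bigcat (R := fun p u v w z =>
  [&& [&& u \in f @^-1: [set p.1], v \in f @^-1: [set p.1],
          w \in f' @^-1: [set p.2] & z \in f' @^-1: [set p.2]],
      h u != h v, h' w != h' z & true])) => [u v w z huv hwz|p].
  rewrite (bigD1 (f u, f' w)) //= big1 => [|[x x'] /=]; last first.
    by rewrite xpair_eqE !inE => /nandP[]/negPf; rewrite eq_sym => ->; rewrite ?andbF.
  rewrite !inE !eqxx andbT addn0 [f v == _]eq_sym [f' z == _]eq_sym.
  have [efuv|] //= := eqVneq (f u) (f v); have [efwz|] //= := eqVneq (f' w) (f' z).
  by rewrite (neq_fibre fh_inj) // (neq_fibre fh_inj').
exact: (block_partition_preim (f @^-1: [set p.1]) h (f' @^-1: [set p.2]) h' hL).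
Qed.

Lemma block_partition_split (V W : finType) (P : rel V) (Q : rel W) S S' T T' L :
  biclique_partition S (fun u v => ~~ P u v) -> biclique_partition S' P ->
  biclique_partition T (fun _ _ => true) -> biclique_partition T' (fun w z => ~~ Q w z) ->
  block_partition L (fun u v w z => P u v && Q w z) ->
  block_partition ([seq (x, y) | x <- S, y <- T] ++ [seq (x, y) | x <- S', y <- T'] ++ L)
    (fun _ _ _ _ => true).
Proof.
move=> hS hS' hT hT' hL.
apply: (block_partition_cat (R2 := fun u v _ _ => P u v) _ (block_partition_allpairs hS hT)).
  by move=> u v w z _ _; case: (P u v).
apply: block_partition_cat (block_partition_allpairs hS' hT') hL.
by move=> u v w z _ _; case: (P u v); case: (Q w z).
Qed.

Lemma pair_fibre_inj (X Y : finType) (u v : X * Y) : u.1 = v.1 -> u.2 = v.2 -> u = v.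
Proof. by case: u v => [? ?] [? ?] /= -> ->. Qed.

Lemma swap_fibre_inj (X Y : finType) (u v : X * Y) : u.2 = v.2 -> u.1 = v.1 -> u = v.
Proof. by move=> e2 e1; apply: pair_fibre_inj. Qed.

Lemma decomposable_prod (X Y : finType) k : decomposable X Y k ->
  decomposable (X * Y)%type (X * Y)%type
    (#|X| * #|Y|.-1 * (#|X| * #|Y|).-1 + #|X|.-1 * (#|Y| * #|X|.-1) + k).
Proof.
case=> L hL hk.
have hS := biclique_partition_fibre (@pair_fibre_inj X Y).
have hT' := biclique_partition_fibre (@swap_fibre_inj X Y).
eexists.
  apply: (block_partition_split (P := fun u v => u.1 != v.1) (Q := fun w z => w.2 != z.2)).
  - by apply: eq_biclique_partition hS => u v _; rewrite negbK.
  - exact: biclique_partition_cross.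
  - exact: biclique_partition_stars.
  - by apply: eq_biclique_partition hT' => u v _; rewrite negbK.
  - exact: (block_partition_cross fst snd hL).
rewrite !size_cat !size_allpairs size_stars card_prod addnA.
apply: leq_add; last exact: leq_trans (size_preim_blocks _ _ _ _ _) hk.
apply: leq_add; apply: leq_mul => //.
- exact: size_fibre_bicliques.
- exact: size_cross_bicliques.
- exact: size_fibre_bicliques.
Qed.

Lemma decomposable_blowup (I U : finType) k : decomposable U U k ->
  decomposable (I * U)%type (I * U)%type
    (#|I|.-1 * (#|I| * #|U|).-1 + #|I| * #|U|.-1 * #|I|.-1 + #|I| * #|I| * k).
Proof.
case=> L hL hk.
eexists.
  apply: (block_partition_split (P := fun u v => u.1 == v.1) (Q := fun w z => w.1 == z.1)).
  - exact: biclique_partition_cross.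
  - exact: biclique_partition_fibre (@pair_fibre_inj I U).
  - exact: biclique_partition_stars.
  - exact: biclique_partition_cross.
  - exact: block_partition_fibre (@pair_fibre_inj I U) (@pair_fibre_inj I U) hL.
rewrite !size_cat !size_allpairs size_stars card_prod addnA.
apply: leq_add; last exact: leq_trans (size_fibre_blocks _ _ _ _ _) (leq_mul _ hk).
apply: leq_add; apply: leq_mul => //.
- exact: size_cross_bicliques.
- exact: size_fibre_bicliques.
- exact: size_cross_bicliques.
Qed.

Lemma prod_size_lt (a b c : nat) : 0 < a -> 0 < b -> c < a.-1 * b.-1 ->
  a * b.-1 * (a * b).-1 + a.-1 * (b * a.-1) + c < (a * b).-1 ^ 2.
Proof.
case: a => // x; case: b => // y _ _ hc.
rewrite [_.+1 * _.+1]mulSnr mulnSr -addnA addnS /= in hc *.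
nia.
Qed.

Lemma blowup_size (m A s : nat) : s < A.-1 ^ 2 ->
  m.-1 * (m * A).-1 + m * A.-1 * m.-1 + m * m * s + m ^ 2 <= (m * A) ^ 2.
Proof.
case: m => [|x]; first by rewrite !mul0n.
case: A => // y hs.
rewrite mulSnr mulnSr -addnA addnS /= in hs *.
have := leq_mul (leqnn (x.+1 * x.+1)) hs.
nia.
Qed.

Lemma sq_pred_gap (K n : nat) : n <= K -> K * n.-1 ^ 2 + n ^ 2 <= K * n ^ 2.
Proof.
case: n => [|p]; first by rewrite muln0.
by move=> hp; have := leq_mul hp (leqnn p); nia.
Qed.

Lemma tail_gap (A n m G : nat) : 0 < A -> 4 * A ^ 3 < n -> m * A <= n + A ->
  G + m ^ 2 <= (m * A) ^ 2 -> 4 * A ^ 3 * G + n ^ 2 <= 4 * A ^ 3 * n ^ 2.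
Proof.
move=> hA hn htn hG.
(* K = 4A^3 makes the saving K m^2 equal to 4A (mA)^2, which outweighs the loss
   from mA <= n + A as soon as n > K. *)
have hKm : 4 * A ^ 3 * m ^ 2 = 4 * A * (m * A) ^ 2 by clear; nia.
have h4A : 4 * A <= 4 * A ^ 3 by clear -hA; nia.
have hAn : A <= n by clear -hA hn; nia.
move: (4 * A ^ 3) hn hKm h4A => K hn hKm h4A.
have hsave : K * G + 4 * A * (m * A) ^ 2 <= K * (m * A) ^ 2.
  by rewrite -hKm -mulnDr leq_mul2l hG orbT.
have hround : (m * A) ^ 2 <= n ^ 2 + 3 * A * n.
  apply: leq_trans (_ : (n + A) ^ 2 <= _); first by rewrite leq_exp2r.
  by have := leq_mul hAn (leqnn A); clear -htn; nia.
have hlarge : 3 * A * K * n <= (4 * A).-1 * n ^ 2.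
  rewrite expnS expn1 mulnA leq_mul2r; apply/orP; right.
  by have := leq_mul (leqnn ((4 * A).-1)) hn; clear -hA; nia.
have [d hKd] : exists d, K = d + 4 * A by exists (K - 4 * A); rewrite subnK.
subst K.
move: hsave hlarge (leq_mul (leqnn d) hround); move: ((m * A) ^ 2) => T.
by clear -hA; nia.
Qed.

Lemma quadratic_gap (G : nat -> nat) (A : nat) : 0 < A ->
  (forall n, G n <= n.-1 ^ 2) ->
  (forall m n, n <= m * A -> G n + m ^ 2 <= (m * A) ^ 2) ->
  forall n, 4 * A ^ 3 * G n + n ^ 2 <= 4 * A ^ 3 * n ^ 2.
Proof.
move=> hA G_small G_blowup n.
have [hnK|hKn] := leqP n (4 * A ^ 3).
  by apply: leq_trans (sq_pred_gap hnK); rewrite leq_add2r leq_mul2l G_small orbT.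
have [hnm hmn] : n <= (n %/ A).+1 * A /\ (n %/ A).+1 * A <= n + A.
  by rewrite mulSn; have := divn_eq n A; have := ltn_pmod n hA; lia.
exact: tail_gap hA hKn hmn (G_blowup _ _ hnm).
Qed.

Lemma g_le_sq_pred n : g n <= n.-1 ^ 2.
Proof.
have := decomposable_stars 'I_n 'I_n; rewrite card_ord mulnn.
by apply: g_le_decomposable; rewrite card_ord.
Qed.

Lemma g_le_blowup (U : finType) s : decomposable U U s -> s < #|U|.-1 ^ 2 ->
  forall m n, n <= m * #|U| -> g n + m ^ 2 <= (m * #|U|) ^ 2.
Proof.
move=> hU hs m n hn; apply: leq_trans (blowup_size m hs); rewrite leq_add2r.
have := decomposable_blowup 'I_m hU; rewrite card_ord.
by apply: g_le_decomposable; rewrite card_prod card_ord.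
Qed.

Lemma g_gap (a b : nat) : 0 < a -> 0 < b -> gK a b < a.-1 * b.-1 ->
  forall n, 4 * (a * b) ^ 3 * g n + n ^ 2 <= 4 * (a * b) ^ 3 * n ^ 2.
Proof.
move=> ha hb hab.
have /decomposable_prod hprod : decomposable 'I_a 'I_b (gK a b).
  by apply: decomposable_gGH; rewrite !card_ord ltnW.
rewrite !card_ord in hprod.
apply: quadratic_gap; first by rewrite muln_gt0 ha hb.
  exact: g_le_sq_pred.
have := g_le_blowup hprod; rewrite card_prod !card_ord; apply.
exact: prod_size_lt.
Qed.

Local Open Scope ring_scope.

Theorem mainTheorem4 (a b : nat) :
  (0 < a)%N -> (0 < b)%N -> (gK a b < (a - 1) * (b - 1))%N ->
  exists beta : rat, beta < 1 /\
    forall n : nat, (g n)%:R <= beta * (n%:R) ^+ 2.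
Proof.
move=> ha hb hab; rewrite !subn1 in hab.
have : (0 < 4 * (a * b) ^ 3)%N by rewrite muln_gt0 expn_gt0 muln_gt0 ha hb.
move: (4 * (a * b) ^ 3)%N (g_gap ha hb hab) => K g_le K_gt0.
have K_pos : 0 < K%:R :> rat by rewrite ltr0n.
exists (1 - K%:R^-1); split; first by rewrite ltrBlDr ltrDl invr_gt0.
move=> n; have := g_le n; rewrite -(ler_nat rat) natrD !natrM => hn.
rewrite expr2 mulrBl mul1r lerBrDr -(ler_pM2l K_pos) mulrDr mulrA.
by rewrite mulfV ?lt0r_neq0 // mul1r.
Qed.
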